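(* Let $G=\langle b\rangle\wr\langle a\rangle$ be the restricted wreath product with $\langle a\rangle\cong\langle b\rangle\cong\mathbb Z$. Then the bijection $$f\colon\{\,a^n\mid n\in\mathbb N\,\}\to\mathbb N,\quad a^n\mapsto n$$ is an interpretation of $(\mathbb N,+,\times)$ in the group $(G,\cdot)$ with parameters.
   Context: The restricted wreath product $\langle b\rangle\wr\langle a\rangle$ means: the elements $a^{-k}ba^k$, $k\in\mathbb Z$, generate a free abelian group $H$ with basis $(a^{-k}ba^k)_{k\in\mathbb Z}$, and the group generated by $a,b$ is $H\rtimes\langle a\rangle$. An interpretation with parameters of $M$ in $N$ is a pair $(n,f)$, $f$ a surjection from a subset of $N^n$ onto $M$, such that the preimage under $f$ (applied coordinatewise) of every set definable without parameters in $M$ is first-order definable in $N$ with parameters from $N$. *)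

From Stdlib Require Import List Arith ZArith Lia.
Import ListNotations.
Set Implicit Arguments.

Inductive term (F : Type) : Type :=
| Var : nat -> term F
| App : F -> term F -> term F -> term F.
Arguments Var {F} _.

(* First-order formulas with equality; connectives not, and, exists
   (the others are abbreviations). Variables are named by nat. *)
Inductive form (F : Type) : Type :=
| FEq : term F -> term F -> form F
| FNot : form F -> form F
| FAnd : form F -> form F -> form F
| FEx : nat -> form F -> form F.

Fixpoint eval_term {F D : Type} (op : F -> D -> D -> D) (rho : nat -> D)
  (t : term F) : D :=
  match t with
  | Var i => rho i
  | App f t1 t2 => op f (eval_term op rho t1) (eval_term op rho t2)
  end.

Definition upd {D : Type} (rho : nat -> D) (i : nat) (d : D) : nat -> D :=
  fun j => if Nat.eqb j i then d else rho j.

Fixpoint sat {F D : Type} (op : F -> D -> D -> D) (rho : nat -> D)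
  (phi : form F) : Prop :=
  match phi with
  | FEq t1 t2 => eval_term op rho t1 = eval_term op rho t2
  | FNot p => ~ sat op rho p
  | FAnd p q => sat op rho p /\ sat op rho q
  | FEx i p => exists d : D, sat op (upd rho i d) p
  end.

Fixpoint fv_term {F : Type} (t : term F) : list nat :=
  match t with
  | Var i => [i]
  | App _ t1 t2 => fv_term t1 ++ fv_term t2
  end.

Fixpoint fv_form {F : Type} (phi : form F) : list nat :=
  match phi with
  | FEq t1 t2 => fv_term t1 ++ fv_term t2
  | FNot p => fv_form p
  | FAnd p q => fv_form p ++ fv_form q
  | FEx i p => filter (fun j => negb (Nat.eqb j i)) (fv_form p)
  end.

(* Environment assigning xs_i to the variable x_i (d0 is an irrelevant default). *)
Definition list_env {D : Type} (d0 : D) (xs : list D) : nat -> D :=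
  fun i => nth i xs d0.

Definition definable0 {F D : Type} (op : F -> D -> D -> D) (d0 : D)
  (k : nat) (X : list D -> Prop) : Prop :=
  exists phi : form F,
    (forall i, In i (fv_form phi) -> i < k) /\
    forall xs : list D, length xs = k -> (X xs <-> sat op (list_env d0 xs) phi).

(* X ⊆ D^k is definable with parameters ps from D: the parameters are
   plugged into the variables x_k,...,x_{k+|ps|-1}. *)
Definition definable_params {F D : Type} (op : F -> D -> D -> D) (d0 : D)
  (k : nat) (X : list D -> Prop) : Prop :=
  exists (phi : form F) (ps : list D),
    (forall i, In i (fv_form phi) -> i < k + length ps) /\
    forall xs : list D, length xs = k ->
      (X xs <-> sat op (list_env d0 (xs ++ ps)) phi).

(* Split a list into k consecutive blocks of length n (an element of
   (N^n)^k viewed as an element of N^(n*k)). *)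
Fixpoint chunks {A : Type} (n k : nat) (ys : list A) : list (list A) :=
  match k with
  | 0 => []
  | S k' => firstn n ys :: chunks n k' (skipn n ys)
  end.

(* (n, f) is an interpretation with parameters of M = (DM, opM) in
   N = (DN, opN): f is a surjection from dom ⊆ DN^n onto DM, and for every
   k and every X ⊆ DM^k definable without parameters in M, the coordinatewise
   preimage f^{-1}(X) ⊆ DN^(n*k) is definable in N with parameters from N. *)
Definition is_interpretation {FM DM FN DN : Type}
  (opM : FM -> DM -> DM -> DM) (dM : DM)
  (opN : FN -> DN -> DN -> DN) (dN : DN)
  (n : nat) (dom : list DN -> Prop) (f : list DN -> DM) : Prop :=
  (forall m : DM, exists ys : list DN, length ys = n /\ dom ys /\ f ys = m) /\
  forall (k : nat) (X : list DM -> Prop),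
    definable0 opM dM k X ->
    definable_params opN dN (n * k)
      (fun ys => Forall dom (chunks n k ys) /\ X (map f (chunks n k ys))).

Inductive arith_sym : Type := Plus | Times.
Definition arith_op (s : arith_sym) : nat -> nat -> nat :=
  match s with Plus => Nat.add | Times => Nat.mul end.

(* Elements: pairs (h, s) with h : Z -> Z finitely supported and s : Z;
   product (h1,s1)(h2,s2) = (h1 + h2(. - s1), s1 + s2). *)
Record WZ : Type := mkWZ {
  lamp : Z -> Z ;
  shift : Z ;
  lamp_fin : exists l : list Z, forall i, lamp i <> 0%Z -> In i l
}.

Lemma wmul_fin (g1 g2 : WZ) :
  exists l : list Z, forall i,
    (lamp g1 i + lamp g2 (i - shift g1))%Z <> 0%Z -> In i l.
Proof.
  destruct (lamp_fin g1) as [l1 H1]. destruct (lamp_fin g2) as [l2 H2].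
  exists (l1 ++ map (fun j => (j + shift g1)%Z) l2).
  intros i Hi. apply in_or_app.
  destruct (Z.eq_dec (lamp g1 i) 0%Z) as [E|E].
  - right. rewrite E in Hi. simpl in Hi.
    apply in_map_iff. exists (i - shift g1)%Z. split; [lia|].
    apply H2. exact Hi.
  - left. apply H1. exact E.
Qed.

Definition wmul (g1 g2 : WZ) : WZ :=
  mkWZ (fun i => (lamp g1 i + lamp g2 (i - shift g1))%Z)
       (shift g1 + shift g2)%Z (wmul_fin g1 g2).

Lemma zero_fin : exists l : list Z, forall i : Z, (fun _ : Z => 0%Z) i <> 0%Z -> In i l.
Proof. exists []. intros i H. exfalso. apply H. reflexivity. Qed.

Lemma delta_fin : exists l : list Z, forall i : Z,
  (fun j : Z => if Z.eqb j 0 then 1%Z else 0%Z) i <> 0%Z -> In i l.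
Proof.
  exists [0%Z]. intros i H. simpl in H. destruct (Z.eqb_spec i 0).
  - left. symmetry. assumption.
  - exfalso. apply H. reflexivity.
Qed.

Definition wone : WZ := mkWZ (fun _ => 0%Z) 0%Z zero_fin.
Definition wa : WZ := mkWZ (fun _ => 0%Z) 1%Z zero_fin.
Definition wb : WZ := mkWZ (fun j => if Z.eqb j 0 then 1%Z else 0%Z) 0%Z delta_fin.

Inductive grp_sym : Type := Mul.
Definition grp_op (s : grp_sym) : WZ -> WZ -> WZ :=
  match s with Mul => wmul end.

Definition wpow (g : WZ) (n : nat) : WZ := Nat.iter n (wmul g) wone.

Definition f_apow (gs : list WZ) : nat := Z.to_nat (shift (hd wone gs)).
Definition dom_apow (gs : list WZ) : Prop := exists n : nat, gs = [wpow wa n].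

From Pilot Require Import Defs.
From Stdlib Require Import List ZArith Lia Znumtheory.
From Stdlib Require Import Classical ClassicalEpsilon FunctionalExtensionality ProofIrrelevance.
Import ListNotations.
Local Notation shift := Defs.shift.

(* Write [g = a^s h] with [h] in the base group [H] and call [s] the shift of [g].  Two
   invariants of the lamp configuration drive the proof: the mass (sum of the lamp
   values), a homomorphism [G -> Z], and the first moment, which satisfies
   [moment (g h) = moment g + moment h + shift g * mass h].  Comparing the moments of
   [x z] and [z x] shows that commuting elements satisfy
   [shift z * mass x = shift x * mass z].  Since the centraliser of [a] is [<a>] and that
   of [b] is [H], this yields an existential definition [mult_rel] of multiplication on
   [<a>]: an element of [a^n H] commuting with [b a] has mass [n], and an element of mass
   [n] commuting with [b a^m] has shift [m n].  By Lagrange's four-square theorem (proved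
   first) the nonnegative powers of [a] are the products of four such squares.  Finally
   arithmetic formulas are translated by structural recursion into group formulas,
   quantifiers being relativised to the nonnegative powers of [a]. *)

Open Scope Z_scope.

(** * Lagrange's four-square theorem *)

Definition sum4sq (n : Z) : Prop := exists a b c d : Z, n = a*a + b*b + c*c + d*d.

Lemma euler_four_square a1 a2 a3 a4 b1 b2 b3 b4 :
  (a1*a1 + a2*a2 + a3*a3 + a4*a4) * (b1*b1 + b2*b2 + b3*b3 + b4*b4) =
    (a1*b1 + a2*b2 + a3*b3 + a4*b4) * (a1*b1 + a2*b2 + a3*b3 + a4*b4)
  + (a1*b2 - a2*b1 + a3*b4 - a4*b3) * (a1*b2 - a2*b1 + a3*b4 - a4*b3)
  + (a1*b3 - a3*b1 - a2*b4 + a4*b2) * (a1*b3 - a3*b1 - a2*b4 + a4*b2)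
  + (a1*b4 + a2*b3 - a3*b2 - a4*b1) * (a1*b4 + a2*b3 - a3*b2 - a4*b1).
Proof. ring. Qed.

Lemma sum4sq_mul x y : sum4sq x -> sum4sq y -> sum4sq (x*y).
Proof.
  intros (a1&a2&a3&a4&->) (b1&b2&b3&b4&->).
  rewrite euler_four_square. eexists _, _, _, _. reflexivity.
Qed.

Lemma sum4sq_cancel m n a b c d : m <> 0 ->
  (m | a) -> (m | b) -> (m | c) -> (m | d) ->
  m*m*n = a*a + b*b + c*c + d*d -> sum4sq n.
Proof.
  intros Hm [a' ->] [b' ->] [c' ->] [d' ->] H. exists a', b', c', d'.
  apply Z.mul_reg_l with (m*m); [intros E; apply Z.mul_eq_0 in E; tauto|].
  rewrite H. ring.
Qed.

Lemma balanced_residue x m : 0 < m -> exists y k, x = y + m*k /\ 4*(y*y) <= m*m.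
Proof.
  intros Hm. pose proof (Z.mod_pos_bound x m Hm). pose proof (Z.div_mod x m ltac:(lia)).
  destruct (Z_le_gt_dec (2*(x mod m)) m).
  - exists (x mod m), (x/m). split; [lia|nia].
  - exists (x mod m - m), (x/m + 1). split; [lia|nia].
Qed.

Lemma prime_no_proper_divisor p m : prime p -> 1 < m < p -> ~ (m | p).
Proof.
  intros Hp Hm Hd. destruct (prime_divisors p Hp m Hd) as [H|[H|[H|H]]]; lia.
Qed.

Lemma extreme_residue_div m y : 4*(y*y) = 0 \/ 4*(y*y) = m*m -> (m | 2*y).
Proof.
  intros [H|H].
  - replace y with 0 by nia. exists 0. ring.
  - assert (E : (2*y - m) * (2*y + m) = 0) by (ring_simplify; lia).
    apply Z.mul_eq_0 in E as [E|E]; [exists 1 | exists (-1)]; lia.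
Qed.

(* Reduce the four roots modulo [m] to balanced
   residues [y_i]; then [sum y_i^2 = m r] with [0 <= r <= m], the extreme cases
   [r = 0] and [r = m] would make [m] divide [p], and otherwise Euler's identity
   applied to [(m p)(m r)] gives four terms all divisible by [m]. *)
Lemma descent_step p m : prime p -> 1 < m < p -> sum4sq (m*p) ->
  exists r, 0 < r < m /\ sum4sq (r*p).
Proof.
  intros Hp Hm (x1&x2&x3&x4&Hx).
  destruct (balanced_residue x1 m) as (y1&k1&E1&B1); [lia|].
  destruct (balanced_residue x2 m) as (y2&k2&E2&B2); [lia|].
  destruct (balanced_residue x3 m) as (y3&k3&E3&B3); [lia|].
  destruct (balanced_residue x4 m) as (y4&k4&E4&B4); [lia|].
  set (r := p - 2*(y1*k1 + y2*k2 + y3*k3 + y4*k4) - m*(k1*k1 + k2*k2 + k3*k3 + k4*k4)).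
  assert (Hr : m*r = y1*y1 + y2*y2 + y3*y3 + y4*y4) by (unfold r; subst x1 x2 x3 x4; lia).
  pose proof (Z.square_nonneg y1); pose proof (Z.square_nonneg y2);
  pose proof (Z.square_nonneg y3); pose proof (Z.square_nonneg y4).
  assert (Hr0 : 0 <= r).
  { destruct (Z_lt_le_dec r 0); [|lia]. assert (m*r < 0) by (apply Z.mul_pos_neg; lia). lia. }
  assert (Hrm : r <= m).
  { destruct (Z_le_gt_dec r m); [lia|]. assert (m*m < m*r) by (apply Z.mul_lt_mono_pos_l; lia). lia. }
  assert (Hp' : p = r + (2*y1)*k1 + (2*y2)*k2 + (2*y3)*k3 + (2*y4)*k4
                    + m*(k1*k1 + k2*k2 + k3*k3 + k4*k4)) by (unfold r; ring).
  clearbody r.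
  assert (Hext : r = 0 \/ r = m -> (m | p)).
  { intros Hrr.
    assert (Hmr : (m | r)) by (destruct Hrr as [E|E]; rewrite E; [apply Z.divide_0_r|apply Z.divide_refl]).
    rewrite Hp'. repeat apply Z.divide_add_r; try apply Z.divide_factor_l; try exact Hmr;
      apply Z.divide_mul_l, extreme_residue_div; destruct Hrr as [E|E]; rewrite E in Hr; lia. }
  assert (Hr' : 0 < r < m).
  { destruct (Z.eq_dec r 0); [|destruct (Z.eq_dec r m)]; [| |lia];
      exfalso; apply (prime_no_proper_divisor p m Hp Hm); auto. }
  exists r. split; [lia|].
  apply (sum4sq_cancel m (r*p) (x1*y1 + x2*y2 + x3*y3 + x4*y4) (x1*y2 - x2*y1 + x3*y4 - x4*y3)
           (x1*y3 - x3*y1 - x2*y4 + x4*y2) (x1*y4 + x2*y3 - x3*y2 - x4*y1)); [lia| | | | |].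
  - exists (r + k1*y1 + k2*y2 + k3*y3 + k4*y4). subst x1 x2 x3 x4. lia.
  - exists (k1*y2 - k2*y1 + k3*y4 - k4*y3). subst x1 x2 x3 x4. ring.
  - exists (k1*y3 - k3*y1 - k2*y4 + k4*y2). subst x1 x2 x3 x4. ring.
  - exists (k1*y4 + k2*y3 - k3*y2 - k4*y1). subst x1 x2 x3 x4. ring.
  - rewrite <- euler_four_square, <- Hx, <- Hr. ring.
Qed.

(* Iterating the descent step down to [m = 1]. *)
Lemma sum4sq_prime_of_multiple p m : prime p -> 0 < m < p -> sum4sq (m*p) -> sum4sq p.
Proof.
  intros Hp Hm. assert (Hm0 : 0 <= m) by lia. revert Hm.
  apply (Z_lt_induction (fun m => 0 < m < p -> sum4sq (m*p) -> sum4sq p)); [|exact Hm0].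
  intros m' IH Hm HS.
  destruct (Z.eq_dec m' 1) as [->|Hm1]; [rewrite Z.mul_1_l in HS; exact HS|].
  destruct (descent_step p m' Hp ltac:(lia) HS) as (r & Hr & HSr).
  apply (IH r); [lia|lia|exact HSr].
Qed.

Definition zrange (h : Z) : list Z := map Z.of_nat (seq 0 (S (Z.to_nat h))).

Lemma in_zrange h x : 0 <= h -> (In x (zrange h) <-> 0 <= x <= h).
Proof.
  intros Hh. unfold zrange. rewrite in_map_iff. split.
  - intros (n & <- & Hn). apply in_seq in Hn. lia.
  - intros Hx. exists (Z.to_nat x). split; [lia|]. apply in_seq. lia.
Qed.

Lemma length_zrange h : 0 <= h -> Z.of_nat (length (zrange h)) = h + 1.
Proof. intros Hh. unfold zrange. rewrite length_map, length_seq. lia. Qed.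

Lemma NoDup_map_zrange (f : Z -> Z) h : 0 <= h ->
  (forall x y, 0 <= x <= h -> 0 <= y <= h -> f x = f y -> x = y) ->
  NoDup (map f (zrange h)).
Proof.
  intros Hh Hf. apply NoDup_map_NoDup_ForallPairs.
  - intros x y Hx Hy. apply in_zrange in Hx, Hy; auto.
  - unfold zrange. apply NoDup_map_NoDup_ForallPairs; [intros x y _ _; lia|apply seq_NoDup].
Qed.

Lemma mod_eq_divides p a b : 0 < p -> a mod p = b mod p -> (p | a - b).
Proof.
  intros Hp H. pose proof (Z.div_mod a p ltac:(lia)). pose proof (Z.div_mod b p ltac:(lia)).
  exists (a/p - b/p). lia.
Qed.

Lemma squares_distinct_mod p h x y : prime p -> p = 2*h + 1 ->
  0 <= x <= h -> 0 <= y <= h -> (p | x*x - y*y) -> x = y.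
Proof.
  intros Hp Hph Hx Hy Hd.
  replace (x*x - y*y) with ((x - y) * (x + y)) in Hd by ring.
  destruct (prime_mult p Hp _ _ Hd) as [H|H];
    destruct (Z.eq_dec (x - y) 0); try lia;
    apply Zdivide_bounds in H; lia.
Qed.

(* For an odd prime [p = 2h + 1] there are [0 <= x, y <= h] with [p | x^2 + y^2 + 1]:
   the [h + 1] residues [x^2] and the [h + 1] residues [-1 - y^2] cannot all be
   distinct among the [p = 2h + 1] residues (pigeonhole). *)
Lemma two_squares_plus_one_mod p h : prime p -> p = 2*h + 1 -> 1 <= h ->
  exists x y, 0 <= x <= h /\ 0 <= y <= h /\ (p | x*x + y*y + 1).
Proof.
  intros Hp Hph Hh. apply NNPP. intros Hno.
  set (L1 := map (fun x => (x*x) mod p) (zrange h)).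
  set (L2 := map (fun y => (-1 - y*y) mod p) (zrange h)).
  assert (Hnd : NoDup (L1 ++ L2)).
  { apply NoDup_app.
    - apply NoDup_map_zrange; [lia|]. intros x y Hx Hy E.
      apply mod_eq_divides in E; [|lia]. eapply squares_distinct_mod; eauto.
    - apply NoDup_map_zrange; [lia|]. intros x y Hx Hy E.
      apply mod_eq_divides in E; [|lia]. symmetry. eapply squares_distinct_mod; eauto.
      replace (y*y - x*x) with (-1 - x*x - (-1 - y*y)) by ring. exact E.
    - intros a Ha Hb. apply in_map_iff in Ha as (x & <- & Hx).
      apply in_map_iff in Hb as (y & Hy & Hy').
      apply in_zrange in Hx, Hy'; try lia.
      apply Hno. exists x, y. do 2 (split; [lia|]).
      apply mod_eq_divides in Hy; [|lia].
      replace (x*x + y*y + 1) with (- ((-1 - y*y) - x*x)) by ring.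
      apply Z.divide_opp_r. exact Hy. }
  assert (Hincl : incl (L1 ++ L2) (zrange (p - 1))).
  { intros a Ha. apply in_zrange; [lia|]. apply in_app_or in Ha.
    destruct Ha as [Ha|Ha]; apply in_map_iff in Ha as (x & <- & _);
      pose proof (Z.mod_pos_bound (x*x) p); pose proof (Z.mod_pos_bound (-1 - x*x) p); lia. }
  apply NoDup_incl_length in Hincl; [|exact Hnd].
  apply Nat2Z.inj_le in Hincl. rewrite length_app, Nat2Z.inj_add in Hincl.
  unfold L1, L2 in Hincl. rewrite !length_map, !length_zrange in Hincl by lia. lia.
Qed.

(* Every prime is a sum of four squares: for odd [p = 2h + 1], some multiple
   [m p = x^2 + y^2 + 1^2 + 0^2] has [0 < m < p], and the descent brings [m] down to 1. *)
Lemma sum4sq_prime p : prime p -> sum4sq p.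
Proof.
  intros Hp. assert (Hp1 : 1 < p) by (destruct Hp; lia).
  destruct (Z.eq_dec p 2) as [->|Hp2]; [exists 1, 1, 0, 0; reflexivity|].
  destruct (Z.Even_or_Odd p) as [[h Hh]|[h Hh]].
  { exfalso. apply (prime_no_proper_divisor p 2 Hp); [lia|]. exists h. lia. }
  destruct (two_squares_plus_one_mod p h Hp Hh ltac:(lia)) as (x & y & Hx & Hy & [m Hm]).
  apply (sum4sq_prime_of_multiple p m Hp); [nia|].
  exists x, y, 1, 0. lia.
Qed.

(* Lagrange's four-square theorem, by strong induction on [n]: primes are handled by
   [sum4sq_prime] and composite numbers by [sum4sq_mul]. *)
Theorem lagrange_four_squares (n : nat) :
  exists a b c d : nat, n = (a*a + b*b + c*c + d*d)%nat.
Proof.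
  assert (HZ : forall z, 0 <= z -> sum4sq z).
  { intros z0 Hz0. apply (Z_lt_induction (fun z => 0 <= z -> sum4sq z)); [|exact Hz0|exact Hz0].
    intros z IH Hz.
    destruct (Z_le_gt_dec z 1).
    - destruct (Z.eq_dec z 0) as [->|]; [exists 0, 0, 0, 0; reflexivity|].
      replace z with 1 by lia. exists 1, 0, 0, 0. reflexivity.
    - destruct (prime_dec z) as [Hp|Hp]; [apply sum4sq_prime, Hp|].
      destruct (not_prime_divide z ltac:(lia) Hp) as (d & Hd & [q Hq]).
      rewrite Hq. apply sum4sq_mul; apply IH; nia. }
  destruct (HZ (Z.of_nat n) ltac:(lia)) as (a & b & c & d & H).
  exists (Z.abs_nat a), (Z.abs_nat b), (Z.abs_nat c), (Z.abs_nat d). nia.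
Qed.

(** * The group [Z wr Z] *)

Definition commute (x y : WZ) : Prop := wmul x y = wmul y x.

Lemma WZ_ext (g1 g2 : WZ) :
  (forall i, lamp g1 i = lamp g2 i) -> shift g1 = shift g2 -> g1 = g2.
Proof.
  destruct g1 as [l1 s1 f1], g2 as [l2 s2 f2]; simpl; intros Hl Hs.
  assert (l1 = l2) by (apply functional_extensionality; auto). subst.
  f_equal. apply proof_irrelevance.
Qed.

Lemma shift_wmul x y : shift (wmul x y) = shift x + shift y.
Proof. reflexivity. Qed.

Lemma wmul_assoc x y z : wmul (wmul x y) z = wmul x (wmul y z).
Proof. apply WZ_ext; simpl; [intros i; rewrite Z.sub_add_distr; ring | ring]. Qed.

Lemma wmul_one_l g : wmul wone g = g.
Proof. apply WZ_ext; simpl; [intros i; rewrite Z.sub_0_r; ring | ring]. Qed.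

Lemma wmul_one_r g : wmul g wone = g.
Proof. apply WZ_ext; simpl; [intros i; ring | ring]. Qed.

(* [a^z] for an integer [z]; note [wa = apowZ 1] holds by conversion. *)
Definition apowZ (z : Z) : WZ := mkWZ (fun _ => 0) z zero_fin.

Lemma apowZ_mul x y : wmul (apowZ x) (apowZ y) = apowZ (x + y).
Proof. apply WZ_ext; simpl; [reflexivity | ring]. Qed.

Lemma apowZ_commute x y : commute (apowZ x) (apowZ y).
Proof. unfold commute. rewrite !apowZ_mul, Z.add_comm. reflexivity. Qed.

Lemma apowZ_inj x y : apowZ x = apowZ y -> x = y.
Proof. intros H. apply (f_equal shift) in H. exact H. Qed.

Lemma wpow_wa n : wpow wa n = apowZ (Z.of_nat n).
Proof.
  induction n as [|n IH]; [reflexivity|]. unfold wpow in *. simpl Nat.iter.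
  rewrite IH. change wa with (apowZ 1). rewrite apowZ_mul. f_equal. lia.
Qed.

Lemma shift_wpow g n : shift (wpow g n) = Z.of_nat n * shift g.
Proof.
  induction n as [|n IH]; [reflexivity|]. unfold wpow in *. simpl Nat.iter.
  simpl shift. rewrite IH. lia.
Qed.

Lemma wpow_commute g n : commute (wpow g n) g.
Proof.
  unfold commute. induction n as [|n IH].
  - unfold wpow. simpl. rewrite wmul_one_l, wmul_one_r. reflexivity.
  - unfold wpow in *. simpl Nat.iter. rewrite wmul_assoc, IH. reflexivity.
Qed.

Lemma shifted_fin (g : WZ) (s : Z) : exists l : list Z, forall i, lamp g (i + s) <> 0 -> In i l.
Proof.
  destruct (lamp_fin g) as [l Hl]. exists (map (fun j => j - s) l).
  intros i Hi. apply in_map_iff. exists (i + s). split; [lia|]. auto.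
Qed.

Lemma opp_shifted_fin (g : WZ) (s : Z) : exists l : list Z, forall i, - lamp g (i + s) <> 0 -> In i l.
Proof. destruct (shifted_fin g s) as [l Hl]. exists l. intros i Hi. apply Hl. lia. Qed.

Definition base_part (g : WZ) : WZ :=
  mkWZ (fun i => lamp g (i + shift g)) 0 (shifted_fin g (shift g)).

Definition winv (g : WZ) : WZ :=
  mkWZ (fun i => - lamp g (i + shift g)) (- shift g) (opp_shifted_fin g (shift g)).

Lemma base_part_decomp g : g = wmul (apowZ (shift g)) (base_part g).
Proof. apply WZ_ext; simpl; [intros i; f_equal; lia | lia]. Qed.

Lemma wmul_inv g : wmul g (winv g) = wone.
Proof. apply WZ_ext; simpl; [intros i; rewrite Z.sub_add; ring | ring]. Qed.

Fixpoint zsum (f : Z -> Z) (lo : Z) (len : nat) : Z :=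
  match len with O => 0 | S l => f lo + zsum f (lo + 1) l end.

Lemma zsum_ext f g lo len : (forall i, f i = g i) -> zsum f lo len = zsum g lo len.
Proof. revert lo; induction len; simpl; intros lo H; [reflexivity|]. rewrite H, IHlen; auto. Qed.

Lemma zsum_add f g lo len : zsum (fun i => f i + g i) lo len = zsum f lo len + zsum g lo len.
Proof. revert lo; induction len; simpl; intros lo; [reflexivity|]. rewrite IHlen. ring. Qed.

Lemma zsum_scal c f lo len : zsum (fun i => c * f i) lo len = c * zsum f lo len.
Proof. revert lo; induction len; simpl; intros lo; [ring|]. rewrite IHlen. ring. Qed.

Lemma zsum_translate f s lo len : zsum (fun i => f (i - s)) lo len = zsum f (lo - s) len.
Proof.
  revert lo; induction len; simpl; intros lo; [reflexivity|]. rewrite IHlen.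
  replace (lo + 1 - s) with (lo - s + 1) by ring. reflexivity.
Qed.

Lemma zsum_split f lo a b : zsum f lo (a + b) = zsum f lo a + zsum f (lo + Z.of_nat a) b.
Proof.
  revert lo; induction a; simpl; intros lo; [rewrite Z.add_0_r; ring|].
  rewrite IHa. replace (lo + 1 + Z.of_nat a) with (lo + Z.pos (Pos.of_succ_nat a)) by lia. ring.
Qed.

Lemma zsum_zero f lo len : (forall i, lo <= i < lo + Z.of_nat len -> f i = 0) -> zsum f lo len = 0.
Proof.
  revert lo; induction len; simpl; intros lo H; [reflexivity|].
  rewrite H by lia. rewrite IHlen; [reflexivity|]. intros i Hi; apply H; lia.
Qed.

Definition supported (f : Z -> Z) (N : nat) : Prop := forall i, Z.of_nat N < Z.abs i -> f i = 0.

Definition window_sum (f : Z -> Z) (N : nat) : Z := zsum f (- Z.of_nat N) (2*N + 1).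

Lemma zsum_covering f N lo len : supported f N ->
  lo <= - Z.of_nat N -> Z.of_nat N < lo + Z.of_nat len ->
  zsum f lo len = window_sum f N.
Proof.
  intros Hs Hlo Hhi. unfold window_sum.
  set (a := Z.to_nat (- Z.of_nat N - lo)).
  set (c := (len - a - (2*N + 1))%nat).
  replace len with (a + ((2*N + 1) + c))%nat by lia.
  rewrite !zsum_split, (zsum_zero f lo a), (zsum_zero f _ c).
  - replace (lo + Z.of_nat a) with (- Z.of_nat N) by lia. ring.
  - intros i Hi. apply Hs. lia.
  - intros i Hi. apply Hs. lia.
Qed.

Lemma window_sum_stable f N M : supported f N -> (N <= M)%nat -> window_sum f M = window_sum f N.
Proof. intros Hs H. unfold window_sum at 1. apply zsum_covering; auto; lia. Qed.

Lemma window_sum_translate f s N M : supported f N -> (N + Z.abs_nat s <= M)%nat ->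
  window_sum (fun i => f (i - s)) M = window_sum f N.
Proof. intros Hs HM. unfold window_sum at 1. rewrite zsum_translate. apply zsum_covering; auto; lia. Qed.

Lemma supported_fin f N : supported f N -> exists l : list Z, forall i, f i <> 0 -> In i l.
Proof.
  intros H. exists (map (fun k => Z.of_nat k - Z.of_nat N) (seq 0 (2*N + 1))).
  intros i Hi. apply in_map_iff. exists (Z.to_nat (i + Z.of_nat N)).
  destruct (Z_le_gt_dec (Z.abs i) (Z.of_nat N)); [|exfalso; apply Hi, H; lia].
  split; [lia|]. apply in_seq. lia.
Qed.

(** * Two invariants: the mass and the first moment of the lamps *)

Lemma list_abs_bound (l : list Z) : exists N : nat, forall i, In i l -> Z.abs i <= Z.of_nat N.
Proof.
  induction l as [|x l [N HN]]; [exists 0%nat; intros i []|].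
  exists (Nat.max N (Z.abs_nat x)). intros i [<-|Hi]; [lia|]. specialize (HN i Hi). lia.
Qed.

Lemma exists_radius g : exists N, supported (lamp g) N.
Proof.
  destruct (lamp_fin g) as [l Hl]. destruct (list_abs_bound l) as [N HN].
  exists N. intros i Hi.
  destruct (Z.eq_dec (lamp g i) 0) as [E|E]; [exact E|]. specialize (HN i (Hl i E)). lia.
Qed.

Definition radius (g : WZ) : nat := proj1_sig (constructive_indefinite_description _ (exists_radius g)).

Lemma radius_spec g : supported (lamp g) (radius g).
Proof. unfold radius. destruct (constructive_indefinite_description _ _). assumption. Qed.

Definition mass (g : WZ) : Z := window_sum (lamp g) (radius g).
Definition moment (g : WZ) : Z := window_sum (fun i => i * lamp g i) (radius g).

Lemma supported_moment f N : supported f N -> supported (fun i => i * f i) N.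
Proof. intros H i Hi. rewrite H by lia. ring. Qed.

Lemma mass_spec g N : supported (lamp g) N -> mass g = window_sum (lamp g) N.
Proof.
  intros H. unfold mass.
  rewrite <- (window_sum_stable _ _ (Nat.max N (radius g)) H) by lia.
  symmetry. apply window_sum_stable; [apply radius_spec | lia].
Qed.

Lemma moment_spec g N : supported (lamp g) N -> moment g = window_sum (fun i => i * lamp g i) N.
Proof.
  intros H. unfold moment.
  rewrite <- (window_sum_stable _ _ (Nat.max N (radius g)) (supported_moment _ _ H)) by lia.
  symmetry. apply window_sum_stable; [apply supported_moment, radius_spec | lia].
Qed.

Lemma supported_wmul g1 g2 :
  supported (lamp (wmul g1 g2)) (radius g1 + radius g2 + Z.abs_nat (shift g1)).
Proof.
  pose proof (radius_spec g1) as H1. pose proof (radius_spec g2) as H2.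
  intros i Hi. simpl. rewrite H1 by lia. rewrite H2 by lia. reflexivity.
Qed.

Lemma mass_mul g1 g2 : mass (wmul g1 g2) = mass g1 + mass g2.
Proof.
  pose proof (radius_spec g1) as H1. pose proof (radius_spec g2) as H2.
  set (M := (radius g1 + radius g2 + Z.abs_nat (shift g1))%nat).
  rewrite (mass_spec _ M (supported_wmul g1 g2)). simpl lamp. unfold window_sum.
  rewrite zsum_add. fold (window_sum (lamp g1) M) (window_sum (fun i => lamp g2 (i - shift g1)) M).
  rewrite (window_sum_translate _ _ (radius g2) M H2) by lia.
  rewrite (window_sum_stable _ (radius g1) M H1) by lia. reflexivity.
Qed.

(* The moment is a crossed homomorphism: translating [g2] by [shift g1] moves its
   moment by [shift g1 * mass g2]. *)
Lemma moment_mul g1 g2 : moment (wmul g1 g2) = moment g1 + moment g2 + shift g1 * mass g2.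
Proof.
  pose proof (radius_spec g1) as H1. pose proof (radius_spec g2) as H2.
  set (M := (radius g1 + radius g2 + Z.abs_nat (shift g1))%nat).
  rewrite (moment_spec _ M (supported_wmul g1 g2)). simpl lamp. unfold window_sum.
  erewrite zsum_ext by (intros i; apply Z.mul_add_distr_l). rewrite zsum_add.
  fold (window_sum (fun i => i * lamp g1 i) M).
  rewrite (window_sum_stable _ (radius g1) M (supported_moment _ _ H1)) by lia.
  set (F := fun j => (j + shift g1) * lamp g2 j).
  assert (HF : supported F (radius g2)) by (intros i Hi; unfold F; rewrite H2 by lia; ring).
  rewrite (zsum_ext _ (fun i => F (i - shift g1))) by (intros i; unfold F; f_equal; ring).
  fold (window_sum (fun i => F (i - shift g1)) M).
  rewrite (window_sum_translate F _ (radius g2) M HF) by lia.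
  unfold window_sum, F.
  rewrite (zsum_ext (fun j => (j + shift g1) * lamp g2 j)
                    (fun j => j * lamp g2 j + shift g1 * lamp g2 j)) by (intros; ring).
  rewrite zsum_add, zsum_scal. unfold moment, mass, window_sum. ring.
Qed.

(* Key relation: if [x] and [z] commute then [shift z * mass x = shift x * mass z]
   (compare the moments of [z x] and [x z]). *)
Lemma commute_mass x z : commute z x -> shift z * mass x = shift x * mass z.
Proof.
  intros H. pose proof (moment_mul z x) as A. pose proof (moment_mul x z) as B.
  rewrite H in A. lia.
Qed.

Lemma mass_apowZ z : mass (apowZ z) = 0.
Proof.
  assert (Hs : supported (lamp (apowZ z)) 0) by (intros i _; reflexivity).
  rewrite (mass_spec _ _ Hs). reflexivity.
Qed.

Lemma mass_wb : mass wb = 1.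
Proof.
  assert (Hs : supported (lamp wb) 0).
  { intros i Hi. simpl. destruct (Z.eqb_spec i 0); [lia|reflexivity]. }
  rewrite (mass_spec _ _ Hs). reflexivity.
Qed.

Lemma mass_winv g : mass (winv g) = - mass g.
Proof.
  pose proof (mass_mul g (winv g)) as H. rewrite wmul_inv in H.
  change wone with (apowZ 0) in H. rewrite mass_apowZ in H. lia.
Qed.

Lemma mass_wpow g n : mass (wpow g n) = Z.of_nat n * mass g.
Proof.
  induction n as [|n IH]; [apply (mass_apowZ 0)|]. unfold wpow in *. simpl Nat.iter.
  rewrite mass_mul, IH. lia.
Qed.

(** * Centralisers of [a] and [b] *)

(* The centraliser of [a] is [<a>]: commuting with [a] makes the lamps
   translation-invariant, and finitely supported invariant lamps vanish. *)
Lemma commute_wa j : commute j wa -> j = apowZ (shift j).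
Proof.
  intros H. apply WZ_ext; [|reflexivity]. simpl.
  assert (Hl : forall i, lamp j i = lamp j (i - 1)).
  { intros i. apply (f_equal (fun g => lamp g i)) in H. simpl in H. lia. }
  assert (Hk : forall (k : nat) i, lamp j i = lamp j (i - Z.of_nat k)).
  { induction k as [|k IH]; intros i; [rewrite Z.sub_0_r; reflexivity|].
    rewrite IH, Hl. f_equal. lia. }
  intros i. rewrite (Hk (Z.to_nat (Z.abs i) + radius j + 1)%nat i).
  apply radius_spec. lia.
Qed.

Lemma commute_wb e : commute wb e <-> shift e = 0.
Proof.
  split; intros H.
  - apply (f_equal (fun g => lamp g (shift e))) in H. simpl in H.
    rewrite Z.sub_diag, Z.sub_0_r in H. simpl in H.
    destruct (Z.eqb_spec (shift e) 0); [assumption | lia].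
  - apply WZ_ext; simpl; [|lia]. intros i. rewrite H, !Z.sub_0_r. ring.
Qed.

(* A base-group element of mass [0] is a "commutator with [a]": [c = q^-1 a^-1 q a]
   for some [q] in the base group, namely the partial sums [q i = sum_(j < i) c j]. *)
Lemma mass_zero_commutator c : shift c = 0 -> mass c = 0 ->
  exists q, shift q = 0 /\ wmul wa (wmul q c) = wmul q wa.
Proof.
  intros Hs Hm. set (N := radius c). pose proof (radius_spec c) as Hc. fold N in Hc.
  set (qf := fun i => zsum (lamp c) (- Z.of_nat N) (Z.to_nat (i + Z.of_nat N))).
  assert (Hq : supported qf (N + 1)).
  { intros i Hi. unfold qf. destruct (Z_le_gt_dec i 0).
    - replace (Z.to_nat (i + Z.of_nat N)) with 0%nat by lia. reflexivity.
    - rewrite (zsum_covering _ N) by (auto; lia). rewrite <- (mass_spec _ _ Hc). exact Hm. }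
  destruct (supported_fin qf _ Hq) as [l Hl].
  exists (mkWZ qf 0 (ex_intro _ l Hl)). split; [reflexivity|].
  apply WZ_ext; [|simpl; rewrite Hs; reflexivity]. simpl. intros i. rewrite !Z.sub_0_r.
  unfold qf. destruct (Z_le_gt_dec (i + Z.of_nat N) 0).
  - replace (Z.to_nat (i + Z.of_nat N)) with 0%nat by lia.
    replace (Z.to_nat (i - 1 + Z.of_nat N)) with 0%nat by lia. simpl.
    rewrite Hc by lia. reflexivity.
  - replace (Z.to_nat (i + Z.of_nat N)) with (Z.to_nat (i - 1 + Z.of_nat N) + 1)%nat by lia.
    rewrite zsum_split. simpl. rewrite !Z.add_0_r. f_equal. f_equal. lia.
Qed.

(** * A first-order definition of multiplication on [<a>] *)

(* For [u = a^m],
   [v = a^n] it says exactly [w = a^(m n)]: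
   - [y] commutes with [b a] and [y = v e] with [e] in the base group,
     so [shift y = n] and, by [commute_mass], [mass y = n];
   - [z = y j c] with [j] in [<a>] and [c] a commutator with [a], so [mass z = n];
   - [z] commutes with [b a^m], so [shift z = m * mass z = m n];
   - [w] lies in [<a>] and [z = w e2] with [e2] in the base group, so [w = a^(m n)]. *)
Definition mult_rel (u v w : WZ) : Prop :=
  exists y z j c e q e2 : WZ,
    commute y (wmul wb wa) /\ y = wmul v e /\ commute wb e /\
    commute z (wmul wb u) /\ commute j wa /\ commute wb q /\
    wmul wa (wmul q c) = wmul q wa /\ z = wmul (wmul y j) c /\
    commute wb e2 /\ z = wmul w e2 /\ commute w wa.

Lemma mult_rel_sound m n w : mult_rel (apowZ m) (apowZ n) w -> w = apowZ (m * n).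
Proof.
  intros (y&z&j&c&e&q&e2&Hy&Hye&He&Hz&Hj&Hq&Hc&Hzd&He2&Hzw&Hw).
  apply commute_wa in Hw, Hj. rewrite Hw. f_equal.
  apply commute_wb in He, He2.
  assert (Sy : shift y = n) by (rewrite Hye; simpl; lia).
  assert (Sz : shift z = shift w) by (rewrite Hzw; simpl; lia).
  assert (My : mass y = n).
  { apply commute_mass in Hy. rewrite mass_mul, mass_wb in Hy.
    change wa with (apowZ 1) in Hy. rewrite mass_apowZ, shift_wmul in Hy.
    cbn [Defs.shift wb apowZ] in Hy. lia. }
  assert (Mc : mass c = 0).
  { apply (f_equal mass) in Hc. rewrite !mass_mul in Hc. lia. }
  assert (Mz : mass z = n) by (rewrite Hzd, !mass_mul, Mc, Hj, mass_apowZ; lia).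
  apply commute_mass in Hz. rewrite mass_mul, mass_wb, mass_apowZ, Mz, Sz, shift_wmul in Hz.
  cbn [Defs.shift wb apowZ] in Hz. lia.
Qed.

(* The witnesses: [y = (b a)^n], [z = (b a^m)^n], [j = a^(m n - n)], [c = (y j)^-1 z]. *)
Lemma mult_rel_complete (m : Z) (n : nat) :
  mult_rel (apowZ m) (apowZ (Z.of_nat n)) (apowZ (m * Z.of_nat n)).
Proof.
  set (y := wpow (wmul wb wa) n).
  set (z := wpow (wmul wb (apowZ m)) n).
  set (j := apowZ (m * Z.of_nat n - Z.of_nat n)).
  set (c := wmul (winv (wmul y j)) z).
  assert (Sy : shift y = Z.of_nat n) by (unfold y; rewrite shift_wpow; simpl; lia).
  assert (Sz : shift z = m * Z.of_nat n) by (unfold z; rewrite shift_wpow; simpl; lia).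
  assert (My : mass y = Z.of_nat n).
  { unfold y. rewrite mass_wpow, mass_mul, mass_wb. change wa with (apowZ 1). rewrite mass_apowZ. lia. }
  assert (Mz : mass z = Z.of_nat n).
  { unfold z. rewrite mass_wpow, mass_mul, mass_wb, mass_apowZ. lia. }
  assert (Sc : shift c = 0) by (unfold c, j; simpl; lia).
  assert (Mc : mass c = 0) by (unfold c, j; rewrite mass_mul, mass_winv, mass_mul, mass_apowZ; lia).
  destruct (mass_zero_commutator c Sc Mc) as (q & Sq & Hq).
  exists y, z, j, c, (base_part y), q, (base_part z).
  change wa with (apowZ 1).
  repeat split; try apply wpow_commute; try apply apowZ_commute; try (apply commute_wb; assumption).
  - rewrite <- Sy. apply base_part_decomp.
  - apply commute_wb. reflexivity.
  - exact Hq.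
  - unfold c. rewrite <- wmul_assoc, wmul_inv, wmul_one_l. reflexivity.
  - apply commute_wb. reflexivity.
  - rewrite <- Sz. apply base_part_decomp.
Qed.

(* [v] is a product of four squares of elements of [<a>] (squares taken through [mult_rel]).
   By Lagrange's theorem these are exactly the powers [a^n], [n >= 0]. *)
Definition sum4sq_rel (v : WZ) : Prop :=
  exists x1 x2 x3 x4 s1 s2 s3 s4 : WZ,
    commute x1 wa /\ commute x2 wa /\ commute x3 wa /\ commute x4 wa /\
    mult_rel x1 x1 s1 /\ mult_rel x2 x2 s2 /\ mult_rel x3 x3 s3 /\ mult_rel x4 x4 s4 /\
    v = wmul (wmul (wmul s1 s2) s3) s4.

Lemma sum4sq_rel_iff v : sum4sq_rel v <-> exists n : nat, v = apowZ (Z.of_nat n).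
Proof.
  split.
  - intros (x1&x2&x3&x4&s1&s2&s3&s4&C1&C2&C3&C4&M1&M2&M3&M4&E).
    apply commute_wa in C1, C2, C3, C4.
    rewrite C1 in M1. rewrite C2 in M2. rewrite C3 in M3. rewrite C4 in M4.
    apply mult_rel_sound in M1, M2, M3, M4. subst s1 s2 s3 s4. rewrite !apowZ_mul in E.
    exists (Z.to_nat (shift x1 * shift x1 + shift x2 * shift x2
                      + shift x3 * shift x3 + shift x4 * shift x4)).
    rewrite E. f_equal. nia.
  - intros (n & ->). destruct (lagrange_four_squares n) as (a&b&c&d&->).
    exists (apowZ (Z.of_nat a)), (apowZ (Z.of_nat b)), (apowZ (Z.of_nat c)), (apowZ (Z.of_nat d)).
    exists (apowZ (Z.of_nat a * Z.of_nat a)), (apowZ (Z.of_nat b * Z.of_nat b)),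
           (apowZ (Z.of_nat c * Z.of_nat c)), (apowZ (Z.of_nat d * Z.of_nat d)).
    change wa with (apowZ 1).
    repeat split; try apply apowZ_commute; try apply mult_rel_complete.
    rewrite !apowZ_mul. f_equal. lia.
Qed.

(** * Translating arithmetic formulas into group formulas *)

Close Scope Z_scope.
Open Scope nat_scope.

(* Variable layout of a translation with [k] free variables: variable [i < k] keeps its
   index and holds [a^(value of x_i)]; [x_k] holds [a] and [x_(k+1)] holds [b]; a bound
   arithmetic variable [i >= k] is stored in [slot k i = k + 2 + 2i]; auxiliary
   witnesses use the odd positions [aux k n = k + 3 + 2n], so the families never meet. *)
Definition aux (k n : nat) : nat := k + 3 + 2*n.
Definition slot (k i : nat) : nat := if i <? k then i else k + 2 + 2*i.

Definition fresh_from (k L x : nat) : Prop := forall n, L <= n -> x <> aux k n.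

Definition gv (i : nat) : term grp_sym := Var i.
Definition gm (t1 t2 : term grp_sym) : term grp_sym := App Mul t1 t2.
Definition comm (t1 t2 : term grp_sym) : form grp_sym := FEq (gm t1 t2) (gm t2 t1).

Lemma upd_eq {D} (r : nat -> D) i d : upd r i d i = d.
Proof. unfold upd. rewrite Nat.eqb_refl. reflexivity. Qed.

Lemma upd_neq {D} (r : nat -> D) i d j : j <> i -> upd r i d j = r j.
Proof. intros H. unfold upd. rewrite (proj2 (Nat.eqb_neq j i) H). reflexivity. Qed.

Ltac neq_layout := first
  [ match goal with H : fresh_from _ _ ?x |- ?x <> _ => apply H; lia end | unfold aux; lia ].
Ltac simpl_upd := repeat match goal with
  | |- context [Nat.eqb ?a ?a] => rewrite Nat.eqb_refl
  | |- context [Nat.eqb ?a ?b] => rewrite (proj2 (Nat.eqb_neq a b)) by neq_layout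
  end; cbv beta iota.

Definition mult_form (k x1 x2 x3 L : nat) : form grp_sym :=
  let Y := aux k L in let Z := aux k (L+1) in let J := aux k (L+2) in let C := aux k (L+3) in
  let E := aux k (L+4) in let Q := aux k (L+5) in let E2 := aux k (L+6) in
  let A := gv k in let B := gv (k+1) in
  FEx Y (FEx Z (FEx J (FEx C (FEx E (FEx Q (FEx E2 (
   FAnd (comm (gv Y) (gm B A))
   (FAnd (FEq (gv Y) (gm (gv x2) (gv E)))
   (FAnd (comm B (gv E))
   (FAnd (comm (gv Z) (gm B (gv x1)))
   (FAnd (comm (gv J) A)
   (FAnd (comm B (gv Q))
   (FAnd (FEq (gm A (gm (gv Q) (gv C))) (gm (gv Q) A))
   (FAnd (FEq (gv Z) (gm (gm (gv Y) (gv J)) (gv C)))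
   (FAnd (comm B (gv E2))
   (FAnd (FEq (gv Z) (gm (gv x3) (gv E2)))
         (comm (gv x3) A))))))))))))))))).

Lemma mult_form_sat k x1 x2 x3 L (eta : nat -> WZ) :
  eta k = wa -> eta (k+1) = wb ->
  fresh_from k L x1 -> fresh_from k L x2 -> fresh_from k L x3 ->
  (sat grp_op eta (mult_form k x1 x2 x3 L) <-> mult_rel (eta x1) (eta x2) (eta x3)).
Proof.
  intros HA HB H1 H2 H3.
  assert (fresh_from k L k) by (intros n _; unfold aux; lia).
  assert (fresh_from k L (k+1)) by (intros n _; unfold aux; lia).
  unfold mult_form, mult_rel, commute, comm, gm, gv. cbn [sat eval_term grp_op]. unfold upd.
  simpl_upd. rewrite HA, HB. reflexivity.
Qed.

Definition natural_form (k v L : nat) : form grp_sym :=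
  let X1 := aux k L in let X2 := aux k (L+1) in let X3 := aux k (L+2) in let X4 := aux k (L+3) in
  let S1 := aux k (L+4) in let S2 := aux k (L+5) in let S3 := aux k (L+6) in let S4 := aux k (L+7) in
  let A := gv k in
  FEx X1 (FEx X2 (FEx X3 (FEx X4 (FEx S1 (FEx S2 (FEx S3 (FEx S4 (
   FAnd (comm (gv X1) A) (FAnd (comm (gv X2) A) (FAnd (comm (gv X3) A) (FAnd (comm (gv X4) A)
   (FAnd (mult_form k X1 X1 S1 (L+8)) (FAnd (mult_form k X2 X2 S2 (L+8))
   (FAnd (mult_form k X3 X3 S3 (L+8)) (FAnd (mult_form k X4 X4 S4 (L+8))
   (FEq (gv v) (gm (gm (gm (gv S1) (gv S2)) (gv S3)) (gv S4)))))))))))))))))).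

Lemma natural_form_sat k v L (eta : nat -> WZ) :
  eta k = wa -> eta (k+1) = wb -> fresh_from k L v ->
  (sat grp_op eta (natural_form k v L) <-> exists n : nat, eta v = apowZ (Z.of_nat n)).
Proof.
  intros HA HB Hv. rewrite <- sum4sq_rel_iff.
  assert (fresh_from k L k) by (intros n _; unfold aux; lia).
  assert (fresh_from k L (k+1)) by (intros n _; unfold aux; lia).
  unfold natural_form, sum4sq_rel, commute, comm, gm, gv. cbn [sat eval_term grp_op].
  split; intros (x1&x2&x3&x4&s1&s2&s3&s4&Hw);
    exists x1, x2, x3, x4, s1, s2, s3, s4; revert Hw;
    rewrite !mult_form_sat by (unfold upd; simpl_upd; first [assumption | intros n Hn; unfold aux; lia]);
    unfold upd; simpl_upd; rewrite HA; tauto.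
Qed.

Lemma slot_not_aux k i n : slot k i <> aux k n.
Proof. unfold slot, aux. destruct (Nat.ltb_spec i k); lia. Qed.

Lemma slot_inj k i j : slot k i = slot k j -> i = j.
Proof. unfold slot. destruct (Nat.ltb_spec i k), (Nat.ltb_spec j k); lia. Qed.

Lemma slot_not_params k i : slot k i <> k /\ slot k i <> k+1.
Proof. unfold slot. destruct (Nat.ltb_spec i k); lia. Qed.

Lemma slot_lt k i : i < k -> slot k i = i.
Proof. unfold slot. destruct (Nat.ltb_spec i k); lia. Qed.

Definition represents (k : nat) (rho : nat -> nat) (eta : nat -> WZ) : Prop :=
  (forall i, eta (slot k i) = apowZ (Z.of_nat (rho i))) /\ eta k = wa /\ eta (k+1) = wb.

Lemma represents_upd_aux k rho eta n g :
  represents k rho eta -> represents k rho (upd eta (aux k n) g).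
Proof.
  intros (H1&H2&H3). split; [|split].
  - intros i. rewrite upd_neq by apply slot_not_aux. auto.
  - rewrite upd_neq by (unfold aux; lia). auto.
  - rewrite upd_neq by (unfold aux; lia). auto.
Qed.

Lemma represents_upd_slot k rho eta i d : represents k rho eta ->
  represents k (upd rho i d) (upd eta (slot k i) (apowZ (Z.of_nat d))).
Proof.
  intros (H1&H2&H3). split; [|split].
  - intros j. destruct (Nat.eq_dec j i) as [->|Hne].
    + rewrite !upd_eq. reflexivity.
    + rewrite !upd_neq; auto. intros E. apply slot_inj in E. auto.
  - rewrite upd_neq by (apply not_eq_sym, slot_not_params). auto.
  - rewrite upd_neq by (apply not_eq_sym, slot_not_params). auto.
Qed.

Definition op_form (k : nat) (f : arith_sym) (x1 x2 o L : nat) : form grp_sym :=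
  match f with
  | Plus => FEq (gv o) (gm (gv x1) (gv x2))
  | Times => mult_form k x1 x2 o L
  end.

Lemma op_form_sat k f x1 x2 o L (eta : nat -> WZ) (m n : nat) :
  eta k = wa -> eta (k+1) = wb ->
  fresh_from k L x1 -> fresh_from k L x2 -> fresh_from k L o ->
  eta x1 = apowZ (Z.of_nat m) -> eta x2 = apowZ (Z.of_nat n) ->
  (sat grp_op eta (op_form k f x1 x2 o L) <-> eta o = apowZ (Z.of_nat (arith_op f m n))).
Proof.
  intros HA HB F1 F2 Fo E1 E2. destruct f; cbn [op_form arith_op].
  - cbn. rewrite E1, E2, apowZ_mul, Nat2Z.inj_add. reflexivity.
  - rewrite mult_form_sat, E1, E2, Nat2Z.inj_mul by assumption. split.
    + apply mult_rel_sound.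
    + intros ->. apply mult_rel_complete.
Qed.

Fixpoint term_form (k : nat) (t : term arith_sym) (o L : nat) : form grp_sym :=
  match t with
  | Var i => FEq (gv o) (gv (slot k i))
  | App f t1 t2 =>
      FEx (aux k L) (FEx (aux k (L+1))
        (FAnd (term_form k t1 (aux k L) (L+2))
        (FAnd (term_form k t2 (aux k (L+1)) (L+2))
              (op_form k f (aux k L) (aux k (L+1)) o (L+2)))))
  end.

Lemma term_form_sat t : forall k L o rho eta, represents k rho eta -> fresh_from k L o ->
  (sat grp_op eta (term_form k t o L) <-> eta o = apowZ (Z.of_nat (eval_term arith_op rho t))).
Proof.
  induction t as [i|f t1 IH1 t2 IH2]; intros k L o rho eta HI Ho.
  { cbn. destruct HI as (H1&_). rewrite H1. reflexivity. }
  cbn [term_form sat eval_term]. set (a1 := aux k L). set (a2 := aux k (L+1)).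
  set (v1 := eval_term arith_op rho t1). set (v2 := eval_term arith_op rho t2).
  assert (F1 : fresh_from k (L+2) a1) by (intros n Hn; unfold a1, aux; lia).
  assert (F2 : fresh_from k (L+2) a2) by (intros n Hn; unfold a2, aux; lia).
  assert (Fo : fresh_from k (L+2) o) by (intros n Hn; apply Ho; lia).
  assert (Ho1 : o <> a1) by (apply Ho; lia). assert (Ho2 : o <> a2) by (apply Ho; lia).
  assert (Ha : a1 <> a2) by (unfold a1, a2, aux; lia).
  assert (Henv : forall g1 g2, let eta' := upd (upd eta a1 g1) a2 g2 in
      represents k rho eta' /\ eta' a1 = g1 /\ eta' a2 = g2 /\ eta' o = eta o).
  { intros g1 g2 eta'. unfold eta', a1, a2.
    split; [apply represents_upd_aux, represents_upd_aux, HI|].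
    rewrite upd_eq, !(upd_neq (upd _ _ _)), upd_eq, !upd_neq; auto. }
  split.
  - intros (g1 & g2 & S1 & S2 & S3). destruct (Henv g1 g2) as (HI' & E1 & E2 & Eo).
    rewrite (IH1 k (L+2) a1 rho _ HI' F1), E1 in S1.
    rewrite (IH2 k (L+2) a2 rho _ HI' F2), E2 in S2.
    destruct HI' as (_ & HA' & HB').
    rewrite (op_form_sat k f a1 a2 o (L+2) _ v1 v2 HA' HB' F1 F2 Fo), Eo in S3; [exact S3| |].
    + rewrite E1. exact S1.
    + rewrite E2. exact S2.
  - intros E. exists (apowZ (Z.of_nat v1)), (apowZ (Z.of_nat v2)).
    destruct (Henv (apowZ (Z.of_nat v1)) (apowZ (Z.of_nat v2))) as (HI' & E1 & E2 & Eo).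
    rewrite (IH1 k (L+2) a1 rho _ HI' F1), (IH2 k (L+2) a2 rho _ HI' F2).
    destruct HI' as (_ & HA' & HB').
    rewrite (op_form_sat k f a1 a2 o (L+2) _ v1 v2 HA' HB' F1 F2 Fo), Eo; auto.
Qed.

Fixpoint translate (k : nat) (phi : form arith_sym) : form grp_sym :=
  match phi with
  | FEq t1 t2 => FEx (aux k 0) (FAnd (term_form k t1 (aux k 0) 1) (term_form k t2 (aux k 0) 1))
  | FNot p => FNot (translate k p)
  | FAnd p q => FAnd (translate k p) (translate k q)
  | FEx i p => FEx (slot k i) (FAnd (natural_form k (slot k i) 0) (translate k p))
  end.

Lemma translate_sat phi : forall k rho eta, represents k rho eta ->
  (sat arith_op rho phi <-> sat grp_op eta (translate k phi)).
Proof.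
  induction phi as [t1 t2|p IH|p IHp q IHq|i p IH]; intros k rho eta HI; cbn [translate sat].
  - assert (Fo : fresh_from k 1 (aux k 0)) by (intros n Hn; unfold aux; lia).
    assert (HI' : forall g, represents k rho (upd eta (aux k 0) g)) by (intros; apply represents_upd_aux, HI).
    setoid_rewrite (fun g => term_form_sat t1 k 1 (aux k 0) rho _ (HI' g) Fo).
    setoid_rewrite (fun g => term_form_sat t2 k 1 (aux k 0) rho _ (HI' g) Fo).
    setoid_rewrite upd_eq. split.
    + intros ->. eexists. split; reflexivity.
    + intros (g & -> & E). apply apowZ_inj in E. lia.
  - rewrite (IH k rho eta HI). reflexivity.
  - rewrite (IHp k rho eta HI), (IHq k rho eta HI). reflexivity.
  - destruct HI as (H1 & HA & HB).
    assert (Hp : forall g, upd eta (slot k i) g k = wa /\ upd eta (slot k i) g (k+1) = wb)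
      by (intros g; rewrite !upd_neq by (apply not_eq_sym, slot_not_params); auto).
    assert (Fs : fresh_from k 0 (slot k i)) by (intros n _; apply slot_not_aux).
    setoid_rewrite (fun g => natural_form_sat k (slot k i) 0 _ (proj1 (Hp g)) (proj2 (Hp g)) Fs).
    setoid_rewrite upd_eq. split.
    + intros (d & Hd). exists (apowZ (Z.of_nat d)). split; [exists d; reflexivity|].
      apply (IH k _ _ (represents_upd_slot k rho eta i d (conj H1 (conj HA HB)))), Hd.
    + intros (g & (d & ->) & Hd). exists d.
      apply (IH k _ _ (represents_upd_slot k rho eta i d (conj H1 (conj HA HB)))), Hd.
Qed.

Ltac fv_cases := repeat match goal with
  | H : In _ (filter _ _) |- _ => apply filter_In in H; destruct H as [H ?Hn]
  | H : negb (Nat.eqb _ _) = true |- _ => apply Bool.negb_true_iff, Nat.eqb_neq in H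
  | H : In _ (_ ++ _) |- _ => apply in_app_or in H; destruct H as [H|H]
  | H : In _ (_ :: _) |- _ => destruct H as [H|H]
  | H : In _ [] |- _ => destruct H
  end.

Lemma fv_mult_form k x1 x2 x3 L x : In x (fv_form (mult_form k x1 x2 x3 L)) ->
  x = x1 \/ x = x2 \/ x = x3 \/ x = k \/ x = k+1.
Proof.
  unfold mult_form, comm, gm, gv. cbn [fv_form fv_term]. intros H. fv_cases;
    subst; first [tauto | exfalso; congruence].
Qed.

Lemma fv_natural_form k v L x : In x (fv_form (natural_form k v L)) -> x = v \/ x = k \/ x = k+1.
Proof.
  unfold natural_form, comm, gm, gv. cbn [fv_form fv_term]. intros H. fv_cases;
    try (apply fv_mult_form in H; destruct H as [H|[H|[H|[H|H]]]]);
    subst; first [tauto | exfalso; congruence].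
Qed.

Lemma fv_term_form t : forall k o L x, In x (fv_form (term_form k t o L)) ->
  x = o \/ x = k \/ x = k+1 \/ exists i, In i (fv_term t) /\ x = slot k i.
Proof.
  induction t as [i|f t1 IH1 t2 IH2]; intros k o L x H; cbn [term_form fv_form fv_term] in *.
  { unfold gv in H. cbn in H. destruct H as [H|[H|[]]]; subst; [tauto|].
    right; right; right. exists i. simpl; auto. }
  fv_cases; [apply IH1 in H | apply IH2 in H | destruct f; unfold op_form, gv, gm in H;
    cbn [fv_form fv_term] in H; fv_cases; try apply fv_mult_form in H].
  all: repeat match goal with
    | H : _ \/ _ |- _ => destruct H as [H|H]
    | H : exists _, _ |- _ => destruct H as (j & Hj & H)
    end; subst; try tauto; try (exfalso; congruence).
  all: right; right; right; eexists; split; [|reflexivity]; apply in_or_app; tauto.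
Qed.

Lemma fv_translate phi : forall k x, In x (fv_form (translate k phi)) ->
  x = k \/ x = k+1 \/ exists i, In i (fv_form phi) /\ x = slot k i.
Proof.
  induction phi as [t1 t2|p IH|p IHp q IHq|i p IH]; intros k x H; cbn [translate fv_form] in *.
  - fv_cases; apply fv_term_form in H;
      repeat match goal with
      | H : _ \/ _ |- _ => destruct H as [H|H]
      | H : exists _, _ |- _ => destruct H as (j & Hj & H)
      end; subst; try tauto; try (exfalso; congruence).
    all: right; right; eexists; split; [|reflexivity]; apply in_or_app; tauto.
  - auto.
  - fv_cases; [apply IHp in H | apply IHq in H];
      destruct H as [H|[H|(j & Hj & H)]]; auto; right; right; exists j; rewrite in_app_iff; auto.
  - fv_cases.
    + apply fv_natural_form in H. destruct H as [H|[H|H]]; subst; tauto.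
    + apply IH in H. destruct H as [H|[H|(j & Hj & H)]]; auto. right; right. exists j.
      split; [|exact H]. apply filter_In. split; [exact Hj|].
      apply Bool.negb_true_iff, Nat.eqb_neq. intros ->. congruence.
Qed.

Fixpoint dom_form (k n : nat) : form grp_sym :=
  match n with
  | O => FEq (gv k) (gv k)
  | S n' => FAnd (natural_form k n' 0) (dom_form k n')
  end.

Lemma dom_form_sat k n (eta : nat -> WZ) : n <= k -> eta k = wa -> eta (k+1) = wb ->
  (sat grp_op eta (dom_form k n) <-> forall i, i < n -> exists m : nat, eta i = apowZ (Z.of_nat m)).
Proof.
  intros Hn HA HB. induction n as [|n IH]; cbn [dom_form sat].
  - split; [intros _ i Hi; lia | reflexivity].
  - rewrite natural_form_sat, IH by first [assumption | lia | intros m _; unfold aux; lia].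
    split.
    + intros [H1 H2] i Hi. destruct (Nat.eq_dec i n) as [->|]; auto. apply H2. lia.
    + intros H. split; [apply H; lia|]. intros i Hi. apply H. lia.
Qed.

Lemma fv_dom_form k n x : In x (fv_form (dom_form k n)) -> x < n \/ x = k \/ x = k+1.
Proof.
  induction n as [|n IH]; cbn [dom_form fv_form]; intros H.
  - unfold gv in H. cbn in H. lia.
  - fv_cases; [apply fv_natural_form in H | apply IH in H]; lia.
Qed.

Definition interp_form (k : nat) (phi : form arith_sym) : form grp_sym :=
  FAnd (dom_form k k) (translate k phi).

Lemma fv_interp_form k phi : (forall i, In i (fv_form phi) -> i < k) ->
  forall x, In x (fv_form (interp_form k phi)) -> x < k + 2.
Proof.
  intros Hfv x H. unfold interp_form in H. cbn [fv_form] in H. fv_cases.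
  - apply fv_dom_form in H. lia.
  - apply fv_translate in H. destruct H as [H|[H|(i & Hi & H)]]; [lia|lia|].
    apply Hfv in Hi. rewrite slot_lt in H by exact Hi. lia.
Qed.

Lemma chunks1 {A} (ys : list A) : chunks 1 (length ys) ys = map (fun y => [y]) ys.
Proof. induction ys as [|y ys IH]; [reflexivity|]. cbn. f_equal. exact IH. Qed.

Lemma dom_apow_single g : dom_apow [g] <-> exists n : nat, g = apowZ (Z.of_nat n).
Proof.
  unfold dom_apow. split.
  - intros (n & E). injection E as ->. exists n. apply wpow_wa.
  - intros (n & ->). exists n. rewrite wpow_wa. reflexivity.
Qed.

Lemma f_apow_apowZ (n : nat) : f_apow [apowZ (Z.of_nat n)] = n.
Proof. apply Nat2Z.id. Qed.

Section ListEnvironment.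

Variable ys : list WZ.
Let k := length ys.
Let eta := list_env wone (ys ++ [wa; wb]).
Let rho := list_env 0 (map f_apow (map (fun y => [y]) ys)).

Lemma list_env_params : eta k = wa /\ eta (k+1) = wb.
Proof.
  unfold eta, list_env. rewrite !app_nth2 by lia.
  rewrite Nat.sub_diag. replace (k + 1 - length ys) with 1 by (unfold k; lia). auto.
Qed.

Lemma list_env_args i : i < k -> eta i = nth i ys wone.
Proof. intros Hi. unfold eta, list_env. apply app_nth1. exact Hi. Qed.

Lemma list_env_represents :
  (forall i, i < k -> exists m : nat, eta i = apowZ (Z.of_nat m)) -> represents k rho eta.
Proof.
  intros HD. split; [|exact list_env_params]. intros i. destruct (Nat.ltb_spec i k) as [Hi|Hi].
  - rewrite slot_lt by exact Hi. destruct (HD i Hi) as (m & Hm). rewrite Hm.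
    unfold rho, list_env. rewrite map_map.
    rewrite nth_indep with (d' := f_apow [wone]) by (rewrite length_map; exact Hi).
    rewrite (map_nth (fun x => f_apow [x])), <- list_env_args, Hm, f_apow_apowZ by exact Hi. reflexivity.
  - unfold slot. destruct (Nat.ltb_spec i k); [lia|].
    unfold eta, rho, list_env. rewrite !nth_overflow; [reflexivity| |].
    + rewrite !length_map. unfold k in *. lia.
    + rewrite length_app. simpl. unfold k in *. lia.
Qed.

Lemma Forall_dom_apow_iff :
  Forall dom_apow (map (fun y => [y]) ys) <->
  forall i, i < k -> exists m : nat, eta i = apowZ (Z.of_nat m).
Proof.
  rewrite Forall_map, Forall_forall. split.
  - intros HF i Hi. rewrite list_env_args by exact Hi. apply dom_apow_single, HF, nth_In, Hi.
  - intros HD y Hy. apply (In_nth ys y wone) in Hy as (i & Hi & <-).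
    apply dom_apow_single. rewrite <- list_env_args by exact Hi. apply HD, Hi.
Qed.

Lemma interp_form_sat phi :
  sat grp_op eta (interp_form k phi) <->
  Forall dom_apow (map (fun y => [y]) ys) /\ sat arith_op rho phi.
Proof.
  destruct list_env_params as [HA HB]. unfold interp_form. cbn [sat].
  rewrite dom_form_sat, Forall_dom_apow_iff by auto. split.
  - intros [HD HT]. split; [exact HD|]. apply (translate_sat phi k rho eta (list_env_represents HD)), HT.
  - intros [HD HT]. split; [exact HD|]. apply (translate_sat phi k rho eta (list_env_represents HD)), HT.
Qed.

End ListEnvironment.

Theorem lemma5p1 :
  is_interpretation arith_op 0 grp_op wone 1 dom_apow f_apow.
Proof.
  split.
  - intros m. exists [wpow wa m]. split; [reflexivity|]. split; [exists m; reflexivity|].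
    rewrite wpow_wa. apply f_apow_apowZ.
  - intros k X (phi & Hfv & HX). exists (interp_form k phi), [wa; wb]. split.
    + intros x Hx. apply (fv_interp_form k phi Hfv) in Hx. simpl. lia.
    + intros ys Hlen. rewrite Nat.mul_1_l in Hlen. subst k.
      rewrite chunks1, interp_form_sat.
      assert (Hl : length (map f_apow (map (fun y => [y]) ys)) = length ys) by now rewrite !length_map.
      specialize (HX _ Hl). tauto.
Qed.
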